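(* Let $G$ be a compact group, $g\mapsto U_g$ an irreducible unitary representation of $G$ on a finite-dimensional Hilbert space $\mathcal{H}$, and $\mathcal{L}$ a $UU$-covariant Lindbladian on $\mathcal{H}$. Then the dynamical semigroup $\mathcal{A}_t=e^{t\mathcal{L}}$ is unital for every $t\ge0$, i.e. $\mathcal{A}_t(I)=I$, and $\mathcal{L}(I)=0$.
   Context: A Lindbladian has GKSL form and generates the CPTP semigroup $(e^{t\mathcal{L}})_{t\ge0}$. $\mathcal{L}$ is $UU$-covariant if $\mathcal{L}(U_gAU_g^\dagger)=U_g\mathcal{L}(A)U_g^\dagger$ for all operators $A$ on $\mathcal{H}$ and all $g\in G$. *)

From HB Require Import structures.
From mathcomp Require Import all_boot all_order all_algebra.
From mathcomp Require Import all_classical all_reals all_analysis.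
From mathcomp Require Import complex.
Set Implicit Arguments. Unset Strict Implicit. Unset Printing Implicit Defensive.
Import Order.TTheory GRing.Theory Num.Theory.
Import numFieldNormedType.Exports.
Local Open Scope classical_set_scope.
Local Open Scope ring_scope.

Section Defs.
Variable R : realType.
Local Notation C := R[i].

Definition adjmx (m n : nat) (A : 'M[C]_(m, n)) : 'M[C]_(n, m) :=
  (map_mx (fun z : C => z^*) A)^T.

Definition unitarymx (n : nat) (U : 'M[C]_n) : Prop :=
  U *m adjmx U = 1%:M /\ adjmx U *m U = 1%:M.

Definition compact_group (G : topologicalType) (mul : G -> G -> G)
    (inv : G -> G) (e : G) : Prop :=
  [/\ (forall x y z, mul x (mul y z) = mul (mul x y) z),
      (forall x, mul e x = x /\ mul x e = x) &
      (forall x, mul (inv x) x = e /\ mul x (inv x) = e)] /\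
  [/\ continuous (fun p : G * G => mul p.1 p.2),
      continuous inv,
      hausdorff_space G &
      compact [set: G]].

Definition subspace (n : nat) (W : set 'cV[C]_n) : Prop :=
  W 0 /\ (forall (a : C) (v w : 'cV[C]_n), W v -> W w -> W (a *: v + w)).

Definition unitary_rep (G : topologicalType) (mul : G -> G -> G) (e : G)
    (n : nat) (U : G -> 'M[C]_n) : Prop :=
  [/\ (forall g h, U (mul g h) = U g *m U h),
      U e = 1%:M,
      (forall g, unitarymx (U g)) &
      continuous (U : G -> ('M[C]_n : normedModType C))].

Definition irreducible_rep (G : Type) (n : nat) (U : G -> 'M[C]_n) : Prop :=
  (0 < n)%N /\
  forall W : set 'cV[C]_n, subspace W ->
    (forall g v, W v -> W (U g *m v)) ->
    W = [set 0] \/ W = [set: 'cV[C]_n].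

(* GKSL (Lindblad) generator with Hamiltonian H and jump operators V k
   (Schroedinger picture):
   L(A) = -i[H,A] + sum_k (V_k A V_k^* - 1/2 {V_k^* V_k, A}) *)
Definition gksl (n m : nat) (H : 'M[C]_n) (V : 'I_m -> 'M[C]_n)
    (A : 'M[C]_n) : 'M[C]_n :=
  - 'i *: (H *m A - A *m H) +
  \sum_(k < m) (V k *m A *m adjmx (V k)
                - 2^-1 *: (adjmx (V k) *m V k *m A + A *m (adjmx (V k) *m V k))).

Definition lindbladian (n : nat) (L : 'M[C]_n -> 'M[C]_n) : Prop :=
  exists (m : nat) (H : 'M[C]_n) (V : 'I_m -> 'M[C]_n),
    adjmx H = H /\ forall A, L A = gksl H V A.

Definition UU_covariant (G : Type) (n : nat) (U : G -> 'M[C]_n)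
    (L : 'M[C]_n -> 'M[C]_n) : Prop :=
  forall g A, L (U g *m A *m adjmx (U g)) = U g *m L A *m adjmx (U g).

Definition sop_exp (n : nat) (L : 'M[C]_n -> 'M[C]_n) (t : R)
    (A : 'M[C]_n) : 'M[C]_n :=
  lim ((series (fun k : nat => (real_complex R (t ^+ k / (k`!)%:R) : C) *: iter k L A))
         @ \oo).

End Defs.

From Pilot Require Import Defs.
From HB Require Import structures.
From mathcomp Require Import all_boot all_order all_algebra.
From mathcomp Require Import all_classical all_reals all_analysis.
From mathcomp Require Import complex.
Set Implicit Arguments. Unset Strict Implicit. Unset Printing Implicit Defensive.
Import Order.TTheory GRing.Theory Num.Theory.
Import numFieldNormedType.Exports.
Local Open Scope classical_set_scope.
Local Open Scope ring_scope.

(* Covariance at [A = I] says that [L(I)] commutes with every [U g]; by Schur's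
   lemma it is a scalar [c I].  A GKSL generator is trace-annihilating, so
   [n c = tr L(I) = 0], hence [L(I) = 0], every term of order [k > 0] of the
   exponential series of [L] at [I] vanishes, and [e^{tL}(I) = I].  Schur's
   lemma only needs irreducibility over an algebraically closed field. *)

Section GKSL.
Variables (R : realType) (n m : nat).
Variables (H : 'M[R[i]]_n) (V : 'I_m -> 'M[R[i]]_n).

Lemma mxtrace_gksl (A : 'M[R[i]]_n) : \tr (gksl H V A) = 0.
Proof.
rewrite /gksl raddfD /= linearZ /= raddfB /= mxtrace_mulC subrr mulr0 add0r.
rewrite raddf_sum /= big1 // => k _.
rewrite raddfB /= linearZ /= raddfD /= mxtrace_mulC (mxtrace_mulC A) !mulmxA.
by rewrite mulrDr (mulrC 2^-1) -splitr subrr.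
Qed.

Lemma gksl0 : gksl H V 0 = 0.
Proof.
rewrite /gksl !mulmx0 !mul0mx subr0 scaler0 add0r big1 // => k _.
by rewrite mul0mx !mulmx0 mul0mx addr0 scaler0 subr0.
Qed.

End GKSL.

Section Schur.
Variables (R : realType) (G : Type) (n : nat) (U : G -> 'M[R[i]]_n).

Definition eigenspace_of (M : 'M[R[i]]_n) (c : R[i]) : set 'cV[R[i]]_n :=
  [set v | M *m v = c *: v].

Lemma eigenspace_of_subspace M c : Defs.subspace (eigenspace_of M c).
Proof.
split=> [|a v w]; rewrite /eigenspace_of /=; first by rewrite mulmx0 scaler0.
move=> Mv Mw.
by rewrite mulmxDr -scalemxAr Mv Mw scalerDr !scalerA mulrC.
Qed.

Lemma commute_eigenspace_of_invariant M c :
  (forall g, M *m U g = U g *m M) ->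
  forall g v, eigenspace_of M c v -> eigenspace_of M c (U g *m v).
Proof.
move=> MU g v; rewrite /eigenspace_of /= => Mv.
by rewrite mulmxA MU -mulmxA Mv scalemxAr.
Qed.

Lemma irreducible_commute_scalar M :
  irreducible_rep U -> (forall g, M *m U g = U g *m M) ->
  exists c, M = c%:M.
Proof.
move=> [n_gt0 irrU] MU.
have [c /eigenvalueP [w Mw w_neq0]] := eigenvalue_closed M^T n_gt0.
exists c.
have Ew : eigenspace_of M c w^T by rewrite /eigenspace_of /= -[M]trmxK -trmx_mul Mw linearZ.
have [E0|Efull] := irrU _ (eigenspace_of_subspace M c)
                      (commute_eigenspace_of_invariant MU).
  move: Ew; rewrite E0 /= => /eqP; rewrite -trmx0 (inj_eq trmx_inj).
  by rewrite (negbTE w_neq0).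
apply/matrixP => i j.
have : eigenspace_of M c (delta_mx j 0) by rewrite Efull.
rewrite /eigenspace_of /= -colE => /matrixP /(_ i 0).
by rewrite !mxE => ->; rewrite eqxx andbT mulr_natr.
Qed.

End Schur.

Lemma UU_covariant_commute1 (R : realType) (G : Type) (n : nat)
    (U : G -> 'M[R[i]]_n) (L : 'M[R[i]]_n -> 'M[R[i]]_n) :
  (forall g, Defs.unitarymx (U g)) -> UU_covariant U L ->
  forall g, L 1%:M *m U g = U g *m L 1%:M.
Proof.
move=> unitU covL g; have [UUt UtU] := unitU g.
have := covL g 1%:M; rewrite mulmx1 UUt => {1}->.
by rewrite -!mulmxA UtU mulmx1.
Qed.

Lemma sop_exp_ker (R : realType) (n : nat) (L : 'M[R[i]]_n -> 'M[R[i]]_n)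
    (A : 'M[R[i]]_n) (t : R) :
  L 0 = 0 -> L A = 0 -> sop_exp L t A = A.
Proof.
move=> L0 LA.
have iterL k : iter k.+1 L A = 0 by elim: k => //= k ->.
rewrite /sop_exp; apply: norm_lim_near_cst.
exists 1%N => // -[|k] //= _.
rewrite /series /= big_nat_recl // big1 => [|j _]; last by rewrite iterL scaler0.
by rewrite addr0 expr0 fact0 divr1 scale1r.
Qed.

Theorem lemma6 (R : realType) (G : topologicalType) (mul : G -> G -> G)
    (inv : G -> G) (e : G) (n : nat) (U : G -> 'M[R[i]]_n)
    (L : 'M[R[i]]_n -> 'M[R[i]]_n) :
  compact_group mul inv e ->
  unitary_rep mul e U ->
  irreducible_rep U ->
  lindbladian L ->
  UU_covariant U L ->
  (forall t : R, 0 <= t -> sop_exp L t 1%:M = 1%:M) /\ L 1%:M = 0.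
Proof.
move=> _ [_ _ unitU _] irrU [m [H [V [_ LE]]]] covL.
have [c Lc] := irreducible_commute_scalar irrU (UU_covariant_commute1 unitU covL).
have L1 : L 1%:M = 0.
  have /eqP := mxtrace_gksl H V 1%:M.
  rewrite -LE Lc mxtrace_scalar mulrn_eq0 => /orP [/eqP n0|/eqP ->].
    by move: (proj1 irrU); rewrite n0.
  by rewrite -scalemx1 scale0r.
split=> // t _; apply: sop_exp_ker => //.
by rewrite LE gksl0.
Qed.
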